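(* Let $\{W_i\}_{i=1}^M$ be subspaces of $\mathbb{R}^N$ that do phase retrieval (respectively, norm retrieval). Suppose that for each $i\in\{1,\dots,M\}$, $W_i=U_i\oplus V_i$, where $U_i,V_i$ are subspaces with $U_i\perp V_i$. Then the family of subspaces $\{U_i\}_{i=1}^M\cup\{V_i\}_{i=1}^M$ does phase retrieval (respectively, norm retrieval) in $\mathbb{R}^N$.
   Context: A family of subspaces $\{W_i\}_{i=1}^M$ of $\mathbb{R}^N$ with orthogonal projections $\{P_i\}_{i=1}^M$ does phase retrieval (respectively, norm retrieval) if for all $x,y\in\mathbb{R}^N$, $\|P_ix\|=\|P_iy\|$ for all $i$ implies $x=\pm y$ (respectively, $\|x\|=\|y\|$). *)

(* Subspaces of R^N are represented as row spaces of square
   matrices 'M[R]_N (mxalgebra, %MS); vectors are row vectors 'rV[R]_N. *)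
From mathcomp Require Import all_boot all_order all_algebra.
From mathcomp Require Import reals.
Set Implicit Arguments. Unset Strict Implicit. Unset Printing Implicit Defensive.
Import Order.TTheory GRing.Theory Num.Theory.
Local Open Scope ring_scope.

Definition dotv (R : realType) (N : nat) (x y : 'rV[R]_N) : R :=
  \sum_(j < N) x 0 j * y 0 j.
Definition normv (R : realType) (N : nat) (x : 'rV[R]_N) : R :=
  Num.sqrt (dotv x x).

Definition is_orth_proj (R : realType) (N : nat) (W : 'M[R]_N) (x p : 'rV[R]_N) : Prop :=
  (p <= W)%MS /\ forall w : 'rV[R]_N, (w <= W)%MS -> dotv (x - p) w = 0.

Definition same_proj_norms (R : realType) (N : nat) (I : finType)
    (W : I -> 'M[R]_N) (x y : 'rV[R]_N) : Prop :=
  forall i px py, is_orth_proj (W i) x px -> is_orth_proj (W i) y py ->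
    normv px = normv py.

Definition phase_retrieval (R : realType) (N : nat) (I : finType) (W : I -> 'M[R]_N) : Prop :=
  forall x y : 'rV[R]_N, same_proj_norms W x y -> x = y \/ x = - y.

Definition norm_retrieval (R : realType) (N : nat) (I : finType) (W : I -> 'M[R]_N) : Prop :=
  forall x y : 'rV[R]_N, same_proj_norms W x y -> normv x = normv y.

Definition orth_subspaces (R : realType) (N : nat) (U V : 'M[R]_N) : Prop :=
  forall u v : 'rV[R]_N, (u <= U)%MS -> (v <= V)%MS -> dotv u v = 0.

Definition union_family (R : realType) (N M : nat) (U V : 'I_M -> 'M[R]_N)
  : 'I_M + 'I_M -> 'M[R]_N :=
  fun k => match k with inl i => U i | inr i => V i end.

(* Split the projection onto W_i = U_i + V_i as P_i x = P_{U_i} x + P_{V_i} x.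
   Since U_i and V_i are orthogonal, Pythagoras gives
   ||P_i x||^2 = ||P_{U_i} x||^2 + ||P_{V_i} x||^2, so equal projection norms on
   the finer family force equal projection norms on {W_i}, and any retrieval
   property of {W_i} passes to {U_i} u {V_i}. *)
From mathcomp Require Import all_boot all_order all_algebra.
From mathcomp Require Import reals.
Set Implicit Arguments. Unset Strict Implicit. Unset Printing Implicit Defensive.
Import Order.TTheory GRing.Theory Num.Theory.
Local Open Scope ring_scope.

Section InnerProduct.
Variables (R : realType) (N : nat).
Implicit Types (x y z : 'rV[R]_N).

Lemma dotvC x y : dotv x y = dotv y x.
Proof. by apply: eq_bigr => j _; rewrite mulrC. Qed.

Lemma dotvDl x y z : dotv (x + y) z = dotv x z + dotv y z.
Proof. by rewrite /dotv -big_split; apply: eq_bigr => j _; rewrite !mxE mulrDl. Qed.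

Lemma dotvDr x y z : dotv z (x + y) = dotv z x + dotv z y.
Proof. by rewrite dotvC dotvDl !(dotvC z). Qed.

Lemma dotvv_ge0 x : 0 <= dotv x x.
Proof. by apply: sumr_ge0 => j _; rewrite -expr2 sqr_ge0. Qed.

Lemma normv_eqP x y : (normv x = normv y) <-> (dotv x x = dotv y y).
Proof.
rewrite /normv; split=> [e|-> //].
by apply/eqP; rewrite -eqr_sqrt ?dotvv_ge0 // e.
Qed.

Lemma dotvv_orthD x y : dotv x y = 0 -> dotv (x + y) (x + y) = dotv x x + dotv y y.
Proof. by move=> xy0; rewrite !dotvDl !dotvDr (dotvC y x) xy0 addr0 add0r. Qed.

End InnerProduct.

Lemma orth_proj_addsmx (R : realType) (N : nat) (W U V : 'M[R]_N)
    (hdec : (W :=: U + V)%MS) (horth : orth_subspaces U V) (x p : 'rV[R]_N) :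
  is_orth_proj W x p ->
  exists pu pv, [/\ p = pu + pv, is_orth_proj U x pu & is_orth_proj V x pv].
Proof.
case=> pW xp_orthW.
have /sub_addsmxP[[a b] /= ep] : (p <= U + V)%MS by rewrite -hdec.
have UW : (U <= W)%MS by rewrite hdec addsmxSl.
have VW : (V <= W)%MS by rewrite hdec addsmxSr.
have aU : (a *m U <= U)%MS := submxMl _ _.
have bV : (b *m V <= V)%MS := submxMl _ _.
exists (a *m U), (b *m V); split=> //; split=> // w wX.
- have -> : x - a *m U = (x - p) + b *m V by rewrite ep opprD addrA subrK.
  by rewrite dotvDl xp_orthW ?(submx_trans wX) // add0r dotvC horth.
- have -> : x - b *m V = (x - p) + a *m U by rewrite ep opprD addrA addrAC subrK.
  by rewrite dotvDl xp_orthW ?(submx_trans wX) // add0r horth.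
Qed.

Lemma same_proj_norms_union (R : realType) (N M : nat) (W U V : 'I_M -> 'M[R]_N)
    (hdec : forall i, (W i :=: U i + V i)%MS)
    (horth : forall i, orth_subspaces (U i) (V i)) (x y : 'rV[R]_N) :
  same_proj_norms (union_family U V) x y -> same_proj_norms W x y.
Proof.
move=> eqUV i px py.
move=> /(orth_proj_addsmx (hdec i) (horth i)) [pu [pv [-> xU xV]]].
move=> /(orth_proj_addsmx (hdec i) (horth i)) [qu [qv [-> yU yV]]].
have /normv_eqP eqU := eqUV (inl i) _ _ xU yU.
have /normv_eqP eqV := eqUV (inr i) _ _ xV yV.
have puv0 : dotv pu pv = 0 by apply: (horth i); [case: xU | case: xV].
have quv0 : dotv qu qv = 0 by apply: (horth i); [case: yU | case: yV].
by apply/normv_eqP; rewrite !dotvv_orthD // eqU eqV.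
Qed.

Theorem mainTheorem10 (R : realType) (N M : nat)
    (W U V : 'I_M -> 'M[R]_N)
    (hdec : forall i, (W i :=: U i + V i)%MS)
    (horth : forall i, orth_subspaces (U i) (V i)) :
  (phase_retrieval W -> phase_retrieval (union_family U V)) /\
  (norm_retrieval W -> norm_retrieval (union_family U V)).
Proof.
by split=> retrW x y eqUV; apply: retrW; apply: same_proj_norms_union eqUV.
Qed.
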